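(* Let $\varphi,\psi:\mathbb{C}\rightarrow\mathbb{C}^n$ be given by $\varphi(\theta)=Y\exp_{N}(\theta S)c+((1,\theta,\cdots,\theta^{N})\otimes I_n)x$ and $\psi(\theta)=Y\exp_{N}(\theta S)d+((1,\theta,\cdots,\theta^{N})\otimes I_n)z$. Then, for any $N_{\max}\ge N+1$, \[ \langle\varphi,\psi\rangle=\sum_{i=0}^Nz_i^Hx_i+d^HW_{N+1,N_{\max}}c+\varepsilon_{N_{\max}}, \qquad W_{N,M}=\sum_{i=N}^{M}\frac{(S^i)^HY^HY S^i}{(i!)^2}, \] where the error satisfies \[ |\varepsilon_{N_{\max}}|\le\|d\|_2\|Y^HY\|_2\|c\|_2\frac{e^{2\|S\|_2}\|S\|_2^{2(N_{\max}+1)}}{((N_{\max}+1)!)^2}. \]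
   Context: Let $Y\in\mathbb{C}^{n\times p}$, $S\in\mathbb{C}^{p\times p}$, $c,d\in\mathbb{C}^p$, and $x=(x_0^T,\ldots,x_N^T)^T$, $z=(z_0^T,\ldots,z_N^T)^T\in\mathbb{C}^{(N+1)n}$ with blocks $x_i,z_i\in\mathbb{C}^n$. Here $\exp_N(\theta S):=\sum_{i=N+1}^\infty \frac{1}{i!}\theta^iS^i$ denotes the remainder of the truncated Taylor expansion of the matrix exponential (with $\exp_{-1}=\exp$). The scalar product of two such functions is defined as the Euclidean scalar product of their monomial Taylor coefficients, i.e. for $\varphi(\theta)=\sum_j\theta^jx_j$, $\psi(\theta)=\sum_j\theta^jz_j$, $\langle\varphi,\psi\rangle:=\sum_{i=0}^\infty z_i^Hx_i$; for the structured functions above this reads \[ \langle\varphi,\psi\rangle=\sum_{i=0}^Nz_i^Hx_i+\sum_{i=N+1}^{\infty}\frac{d^H(S^i)^HY^HY S^ic}{(i!)^2}. \] *)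

From HB Require Import structures.
From mathcomp Require Import all_boot all_order all_algebra.
From mathcomp Require Import all_classical all_reals all_analysis.
From mathcomp Require Import complex.
Set Implicit Arguments. Unset Strict Implicit. Unset Printing Implicit Defensive.
Import Order.TTheory GRing.Theory Num.Theory.
Import numFieldNormedType.Exports.
Local Open Scope ring_scope.
Local Open Scope complex_scope.

(* standard (norm-induced) topology on the complex numbers R[i] *)
HB.instance Definition _ (R : rcfType) := PseudoPointedMetric.copy R[i] (R[i])^o.

Definition ctr (R : rcfType) m n (A : 'M[R[i]]_(m, n)) : 'M[R[i]]_(n, m) :=
  (map_mx (fun z : R[i] => z^*) A)^T.

Definition cmod (R : rcfType) (z : R[i]) : R :=
  Num.sqrt (complex.Re z ^+ 2 + complex.Im z ^+ 2).

Definition vnorm2 (R : rcfType) n (v : 'cV[R[i]]_n) : R :=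
  Num.sqrt (\sum_(k < n) cmod (v k 0) ^+ 2).

Definition mnorm2 (R : realType) m n (A : 'M[R[i]]_(m, n)) : R :=
  sup [set vnorm2 (A *m v) | v in [set v : 'cV[R[i]]_n | vnorm2 v = 1]]%classic.

Definition sc (R : rcfType) (A : 'M[R[i]]_1) : R[i] := A 0 0.

(* Monomial Taylor coefficients of
   theta |-> Y exp_N(theta S) c + ((1,theta,...,theta^N) (x) I_n) x,
   where x_i are the blocks of x: coefficient j is x_j for j <= N and
   Y S^j c / j! for j > N. *)
Definition taylor_coef (R : rcfType) n p N (Y : 'M[R[i]]_(n, p)) (S : 'M[R[i]]_p)
  (c : 'cV[R[i]]_p) (x : 'I_N.+1 -> 'cV[R[i]]_n) (j : nat) : 'cV[R[i]]_n :=
  match (insub j : option 'I_N.+1) with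
  | Some k => x k
  | None => (j`!%:R)^-1 *: (Y *m (S ^+ j) *m c)
  end.

(* Scalar product of two functions given by their monomial Taylor
   coefficient sequences: sum_{i>=0} z_i^H x_i. *)
Definition fun_inner (R : realType) n (a b : nat -> 'cV[R[i]]_n) : R[i] :=
  limn (fun M : nat => \sum_(0 <= i < M) sc (ctr (b i) *m a i)).

Definition Wmat (R : rcfType) n p (Y : 'M[R[i]]_(n, p)) (S : 'M[R[i]]_p) (N M : nat)
  : 'M[R[i]]_p :=
  \sum_(N <= i < M.+1) ((i`!%:R) ^+ 2)^-1 *: (ctr (S ^+ i) *m ctr Y *m Y *m S ^+ i).

From HB Require Import structures.
From mathcomp Require Import all_boot all_order all_algebra.
From mathcomp Require Import all_classical all_reals all_analysis.
From mathcomp Require Import complex.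
From mathcomp Require Import ring lra.
Import Order.TTheory GRing.Theory Num.Theory.
Import numFieldNormedType.Exports.
Local Open Scope ring_scope.

(* Up to N the Taylor coefficients of phi and psi are the blocks of x and z; beyond N their
   products are the summands d^H (S^i)^H Y^H Y S^i c / (i!)^2 of W, so eps is the tail of
   this series beyond Nmax.  By Cauchy-Schwarz and submultiplicativity of the spectral norm,
   the i-th summand is at most |d| |Y^H Y| |c| (s^i / i!)^2 with s = |S|, and since
   (K + j)! >= K! j! the tail from K is at most (s^K / K!)^2 sum_j (s^j / j!)^2, which is
   at most (s^K / K!)^2 e^(2s).  The same bound on the partial sums of moduli gives the
   convergence of the complex series, through its real and imaginary parts. *)

Set Implicit Arguments.
Unset Strict Implicit.

Section ComplexModulus.
Variable R : rcfType.
Implicit Types (u v : R[i]) (r : R).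

Lemma cmodE u : (cmod u)%:C%C = `|u|.
Proof. by rewrite normc_def. Qed.

Lemma cmod_ge0 u : 0 <= cmod u.
Proof. exact: sqrtr_ge0. Qed.

Lemma cmod_eq0 u : (cmod u == 0) = (u == 0).
Proof. by rewrite -(inj_eq (@complexI R)) cmodE normr_eq0. Qed.

Lemma cmod0 : cmod (0 : R[i]) = 0.
Proof. by apply/eqP; rewrite cmod_eq0. Qed.

Lemma cmodM u v : cmod (u * v) = cmod u * cmod v.
Proof. by apply: (@complexI R); rewrite rmorphM /= !cmodE normrM. Qed.

Lemma cmodJ u : cmod u^*%C = cmod u.
Proof. by apply: (@complexI R); rewrite !cmodE normcJ. Qed.

Lemma cmod_real r : cmod r%:C%C = `|r|.
Proof. by rewrite /cmod /= expr0n /= addr0 sqrtr_sqr. Qed.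

Lemma cmod_sum I (s : seq I) (P : pred I) (F : I -> R[i]) :
  cmod (\sum_(i <- s | P i) F i) <= \sum_(i <- s | P i) cmod (F i).
Proof.
rewrite -lecR cmodE rmorph_sum /=.
under [X in _ <= X]eq_bigr do rewrite cmodE.
exact: ler_norm_sum.
Qed.

Lemma Re_le_cmod u : `|complex.Re u| <= cmod u.
Proof. by rewrite /cmod -sqrtr_sqr ler_wsqrtr // lerDl sqr_ge0. Qed.

Lemma Im_le_cmod u : `|complex.Im u| <= cmod u.
Proof. by rewrite /cmod -sqrtr_sqr ler_wsqrtr // lerDr sqr_ge0. Qed.

Lemma cmod_le_Re_Im u : cmod u <= `|complex.Re u| + `|complex.Im u|.
Proof.
case: u => r1 r2 /=; have sum_ge0 : 0 <= `|r1| + `|r2| by rewrite addr_ge0.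
rewrite /cmod /= -(ger0_norm sum_ge0) -[`|_ + _|]sqrtr_sqr ler_wsqrtr //.
rewrite -(real_normK (num_real r1)) -(real_normK (num_real r2)).
have := normr_ge0 r1; have := normr_ge0 r2; nra.
Qed.

End ComplexModulus.

Section CauchySchwarz.
Variable R : rcfType.

(* Lagrange's identity: the gap is half the sum of the squares (a_i b_j - a_j b_i)^2. *)
Lemma sqr_sum_mul_le m (a b : 'I_m -> R) :
  (\sum_i a i * b i) ^+ 2 <= (\sum_i a i ^+ 2) * (\sum_i b i ^+ 2).
Proof.
have lagrange_ge0 : 0 <= \sum_i \sum_j (a i * b j - a j * b i) ^+ 2.
  by apply: sumr_ge0 => i _; apply: sumr_ge0 => j _; apply: sqr_ge0.
suff lagrange : \sum_i \sum_j (a i * b j - a j * b i) ^+ 2 =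
    2 * ((\sum_i a i ^+ 2) * (\sum_i b i ^+ 2) - (\sum_i a i * b i) ^+ 2).
  by rewrite lagrange in lagrange_ge0; lra.
have prod_sq : (\sum_i a i ^+ 2) * (\sum_i b i ^+ 2) =
    \sum_i \sum_j a i ^+ 2 * b j ^+ 2.
  by rewrite mulr_suml; apply: eq_bigr => i _; rewrite mulr_sumr.
have sq_sum : (\sum_i a i * b i) ^+ 2 = \sum_i \sum_j (a i * b i) * (a j * b j).
  by rewrite expr2 mulr_suml; apply: eq_bigr => i _; rewrite mulr_sumr.
have swap : \sum_i \sum_j a j ^+ 2 * b i ^+ 2 = \sum_i \sum_j a i ^+ 2 * b j ^+ 2.
  exact: exchange_big.
rewrite prod_sq sq_sum.
transitivity (\sum_i \sum_j a i ^+ 2 * b j ^+ 2 + \sum_i \sum_j a j ^+ 2 * b i ^+ 2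
   - 2 * \sum_i \sum_j (a i * b i) * (a j * b j)); last by rewrite swap; ring.
rewrite -big_split /= mulr_sumr -sumrB; apply: eq_bigr => i _.
rewrite -big_split /= mulr_sumr -sumrB; apply: eq_bigr => j _.
ring.
Qed.

Lemma sum_mul_le_sqrt m (a b : 'I_m -> R) :
  (forall i, 0 <= a i) -> (forall i, 0 <= b i) ->
  \sum_i a i * b i <= Num.sqrt (\sum_i a i ^+ 2) * Num.sqrt (\sum_i b i ^+ 2).
Proof.
move=> a_ge0 b_ge0.
have sum_ge0 : 0 <= \sum_i a i * b i by apply: sumr_ge0 => i _; apply: mulr_ge0.
have asq_ge0 : 0 <= \sum_i a i ^+ 2 by apply: sumr_ge0 => i _; apply: sqr_ge0.
rewrite -sqrtrM // -(ger0_norm sum_ge0) -sqrtr_sqr ler_wsqrtr //.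
exact: sqr_sum_mul_le.
Qed.

End CauchySchwarz.

Section VectorNorm.
Variable R : rcfType.

Lemma vnorm2_ge0 n (v : 'cV[R[i]]_n) : 0 <= vnorm2 v.
Proof. exact: sqrtr_ge0. Qed.

Lemma vnorm2_eq0 n (v : 'cV[R[i]]_n) : (vnorm2 v == 0) = (v == 0).
Proof.
have sq_ge0 k : 0 <= cmod (v k 0) ^+ 2 by apply: sqr_ge0.
have sum_ge0 : 0 <= \sum_k cmod (v k 0) ^+ 2 by apply: sumr_ge0.
rewrite sqrtr_eq0 le_eqVlt ltNge sum_ge0 orbF psumr_eq0 //.
apply/allP/eqP => [v0|-> k _]; last by rewrite mxE sqrf_eq0 cmod_eq0 eqxx.
apply/matrixP => k j; rewrite (ord1 j) mxE.
by have := v0 k (mem_index_enum k); rewrite sqrf_eq0 cmod_eq0 => /eqP.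
Qed.

Lemma vnorm2Z n (a : R[i]) (v : 'cV[R[i]]_n) : vnorm2 (a *: v) = cmod a * vnorm2 v.
Proof.
rewrite /vnorm2; under eq_bigr do rewrite mxE cmodM exprMn.
by rewrite -mulr_sumr sqrtrM ?sqr_ge0 // sqrtr_sqr ger0_norm ?cmod_ge0.
Qed.

Lemma cmod_coord_le n (v : 'cV[R[i]]_n) k : cmod (v k 0) <= vnorm2 v.
Proof.
rewrite -(ger0_norm (cmod_ge0 (v k 0))) -sqrtr_sqr ler_wsqrtr //.
by rewrite (bigD1 k) //= lerDl; apply: sumr_ge0 => i _; apply: sqr_ge0.
Qed.

Lemma sc_ctr_mulmx n (u v : 'cV[R[i]]_n) :
  sc (ctr u *m v) = \sum_k (u k 0)^*%C * v k 0.
Proof. by rewrite /sc !mxE; apply: eq_bigr => k _; rewrite !mxE. Qed.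

Lemma cmod_sc_ctr_le n (u v : 'cV[R[i]]_n) :
  cmod (sc (ctr u *m v)) <= vnorm2 u * vnorm2 v.
Proof.
rewrite sc_ctr_mulmx; apply: le_trans (cmod_sum _ _ _) _.
under eq_bigr do rewrite cmodM cmodJ.
by apply: sum_mul_le_sqrt => k; apply: cmod_ge0.
Qed.

(* The witness is the l2-norm of the vector of row l1-norms. *)
Lemma vnorm2_mulmx_bounded m n (A : 'M[R[i]]_(m, n)) :
  exists K, forall w, vnorm2 (A *m w) <= K * vnorm2 w.
Proof.
exists (Num.sqrt (\sum_k (\sum_j cmod (A k j)) ^+ 2)) => w.
rewrite /vnorm2 -sqrtrM; last by apply: sumr_ge0 => k _; apply: sqr_ge0.
apply: ler_wsqrtr; rewrite mulr_suml; apply: ler_sum => k _.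
have w_ge0 : 0 <= \sum_k cmod (w k 0) ^+ 2 by apply: sumr_ge0 => i _; apply: sqr_ge0.
rewrite -(sqr_sqrtr w_ge0) -exprMn; apply: lerXn2r; rewrite ?nnegrE ?cmod_ge0 //.
  by rewrite mulr_ge0 ?sqrtr_ge0 ?sumr_ge0 // => j _; apply: cmod_ge0.
rewrite mxE; apply: le_trans (cmod_sum _ _ _) _.
rewrite mulr_suml; apply: ler_sum => j _; rewrite cmodM ler_wpM2l ?cmod_ge0 //.
exact: cmod_coord_le.
Qed.

End VectorNorm.

Section OperatorNorm.
Variable R : realType.
Local Open Scope classical_set_scope.

Let unit_images m n (A : 'M[R[i]]_(m, n)) :=
  [set vnorm2 (A *m v) | v in [set v : 'cV[R[i]]_n | vnorm2 v = 1]].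

Let unit_images_ubound m n (A : 'M[R[i]]_(m, n)) : has_ubound (unit_images A).
Proof.
have [K A_le] := vnorm2_mulmx_bounded A.
by exists K => _ [w /= w1 <-]; apply: le_trans (A_le w) _; rewrite w1 mulr1.
Qed.

Lemma mnorm2_ge0 m n (A : 'M[R[i]]_(m, n)) : 0 <= mnorm2 A.
Proof.
rewrite /mnorm2 -/(unit_images A).
have [->|/set0P [e Ae]] := eqVneq (unit_images A) set0; first by rewrite sup0.
apply: le_trans (ub_le_sup (unit_images_ubound A) Ae).
by case: Ae => w _ <-; apply: vnorm2_ge0.
Qed.

Lemma mnorm2_le m n (A : 'M[R[i]]_(m, n)) v : vnorm2 (A *m v) <= mnorm2 A * vnorm2 v.
Proof.
have [v0|v_neq0] := eqVneq (vnorm2 v) 0.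
  have /eqP v_eq0 : v == 0 by rewrite -vnorm2_eq0 v0.
  by rewrite v0 mulr0 v_eq0 mulmx0 le_eqVlt vnorm2_eq0 eqxx.
have v_gt0 : 0 < vnorm2 v by rewrite lt_def v_neq0 vnorm2_ge0.
pose a : R[i] := ((vnorm2 v)^-1)%:C%C.
have cmod_a : cmod a = (vnorm2 v)^-1 by rewrite cmod_real ger0_norm // invr_ge0 ltW.
have Av_le : vnorm2 (A *m (a *: v)) <= mnorm2 A.
  rewrite /mnorm2 -/(unit_images A); apply: (ub_le_sup (unit_images_ubound A)).
  by exists (a *: v); rewrite //= vnorm2Z cmod_a mulVf.
by rewrite -ler_pdivrMr // mulrC -cmod_a -vnorm2Z scalemxAr.
Qed.

Lemma mnorm2_exp_le p (S : 'M[R[i]]_p) (v : 'cV[R[i]]_p) j :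
  vnorm2 (S ^+ j *m v) <= mnorm2 S ^+ j * vnorm2 v.
Proof.
elim: j => [|j IH]; first by rewrite !expr0 mul1mx mul1r.
rewrite exprS -mulmxE -mulmxA; apply: le_trans (mnorm2_le _ _) _.
by rewrite exprS -mulrA ler_wpM2l // mnorm2_ge0.
Qed.

End OperatorNorm.

Section ConjugateTranspose.
Variable R : rcfType.

Lemma ctrZ m n (a : R[i]) (A : 'M[R[i]]_(m, n)) : ctr (a *: A) = a^*%C *: ctr A.
Proof. by apply/matrixP => i j; rewrite !mxE rmorphM. Qed.

Lemma ctr_mulmx m n k (A : 'M[R[i]]_(m, n)) (B : 'M[R[i]]_(n, k)) :
  ctr (A *m B) = ctr B *m ctr A.
Proof.
apply/matrixP => i j; rewrite !mxE rmorph_sum; apply: eq_bigr => l _.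
by rewrite !mxE rmorphM mulrC.
Qed.

Lemma scZ (a : R[i]) (A : 'M[R[i]]_1) : sc (a *: A) = a * sc A.
Proof. by rewrite /sc mxE. Qed.

Lemma sc_sum I (r : seq I) (P : pred I) (F : I -> 'M[R[i]]_1) :
  sc (\sum_(j <- r | P j) F j) = \sum_(j <- r | P j) sc (F j).
Proof. by rewrite /sc summxE. Qed.

End ConjugateTranspose.

Section WmatTerms.
Variables (R : rcfType) (n p : nat).
Variables (Y : 'M[R[i]]_(n, p)) (S : 'M[R[i]]_p) (c d : 'cV[R[i]]_p).

Definition Wterm j : R[i] :=
  sc (ctr d *m (((j`!%:R ^+ 2)^-1 : R[i]) *: (ctr (S ^+ j) *m ctr Y *m Y *m S ^+ j)) *m c).

Lemma sc_Wmat N M : sc (ctr d *m Wmat Y S N M *m c) = \sum_(N <= j < M.+1) Wterm j.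
Proof. by rewrite /Wmat mulmx_sumr mulmx_suml sc_sum. Qed.

Lemma WtermE j : Wterm j =
  (j`!%:R ^+ 2)^-1 * sc (ctr (S ^+ j *m d) *m (ctr Y *m Y) *m (S ^+ j *m c)).
Proof.
rewrite /Wterm -scalemxAr -scalemxAl scZ; congr (_ * sc _).
by rewrite ctr_mulmx !mulmxA.
Qed.

Lemma sc_ctr_taylor_tail j :
  sc (ctr ((j`!%:R)^-1 *: (Y *m S ^+ j *m d)) *m ((j`!%:R)^-1 *: (Y *m S ^+ j *m c)))
  = Wterm j.
Proof.
rewrite WtermE ctrZ conjc_inv conjc_nat -scalemxAl -scalemxAr !scZ mulrA -exprVn expr2.
by congr (_ * sc _); rewrite !ctr_mulmx !mulmxA.
Qed.

End WmatTerms.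

Section ExpCoeff.
Variables (R : realType) (s : R).
Hypothesis s_ge0 : 0 <= s.

Lemma fact_mul_le i k : (i`! * k`! <= (i + k)`!)%N.
Proof.
have := @bin_fact (i + k) k (leq_addl _ _); rewrite addnK => <-.
by rewrite mulnC leq_pmull // bin_gt0 leq_addl.
Qed.

Lemma exp_coeffD_le i k : exp_coeff s (i + k) <= exp_coeff s i * exp_coeff s k.
Proof.
rewrite /exp_coeff /= exprD mulrACA ler_wpM2l ?mulr_ge0 ?exprn_ge0 //.
rewrite -invfM lef_pV2 ?posrE ?mulr_gt0 ?ltr0n ?fact_gt0 //.
by rewrite -natrM ler_nat fact_mul_le.
Qed.

Lemma series_exp_coeff_le_expR k : series (exp_coeff s) k <= expR s.
Proof.
rewrite expRE /pseries -exp_coeffE.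
apply: nondecreasing_cvgn_le; last exact: is_cvg_series_exp_coeff.
by apply: nondecreasing_series => j _ _; apply: exp_coeff_ge0.
Qed.

Lemma exp_coeff_le_expR j : exp_coeff s j <= expR s.
Proof.
apply: le_trans (series_exp_coeff_le_expR j.+1).
rewrite /series /= big_nat_recr //= lerDr.
by apply: sumr_ge0 => k _; apply: exp_coeff_ge0.
Qed.

(* Each square is bounded by one factor of exp(s); the remaining sum is a partial sum of exp(s). *)
Lemma sum_sqr_exp_coeff_le k : \sum_(0 <= j < k) exp_coeff s j ^+ 2 <= expR (2 * s).
Proof.
apply: le_trans (_ : \sum_(0 <= j < k) exp_coeff s j * expR s <= _).
  by apply: ler_sum => j _; rewrite expr2 ler_wpM2l ?exp_coeff_ge0 ?exp_coeff_le_expR.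
rewrite -mulr_suml mulr_natl mulr2n expRD ler_wpM2r ?expR_ge0 //.
exact: series_exp_coeff_le_expR.
Qed.

Lemma sum_sqr_exp_coeff_tail_le k m :
  \sum_(k <= j < m) exp_coeff s j ^+ 2 <= expR (2 * s) * exp_coeff s k ^+ 2.
Proof.
rewrite -[k in X in X <= _]add0n big_addn.
apply: le_trans (_ : \sum_(0 <= j < m - k) exp_coeff s k ^+ 2 * exp_coeff s j ^+ 2 <= _).
  have e_ge0 i : 0 <= exp_coeff s i by apply: exp_coeff_ge0.
  apply: ler_sum => j _.
  have := exp_coeffD_le j k; rewrite mulrC => le_jk.
  by rewrite -exprMn !expr2 ler_pM ?e_ge0.
by rewrite -mulr_sumr mulrC ler_wpM2r ?sqr_ge0 ?sum_sqr_exp_coeff_le.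
Qed.

End ExpCoeff.

Section WtermBound.
Variables (R : realType) (n p : nat).
Variables (Y : 'M[R[i]]_(n, p)) (S : 'M[R[i]]_p) (c d : 'cV[R[i]]_p).

Let D := vnorm2 d * mnorm2 (ctr Y *m Y) * vnorm2 c.

Lemma cmod_Wterm_le j : cmod (Wterm Y S c d j) <= D * exp_coeff (mnorm2 S) j ^+ 2.
Proof.
rewrite WtermE cmodM -mulmxA.
set u := S ^+ j *m d; set v := S ^+ j *m c; set G := ctr Y *m Y.
have cmod_inv : cmod ((j`!%:R ^+ 2)^-1 : R[i]) = (j`!%:R ^+ 2)^-1.
  rewrite -(rmorph_nat (@real_complex R)) -rmorphXn -fmorphV cmod_real.
  by rewrite ger0_norm // invr_ge0 sqr_ge0.
have uGv_le : cmod (sc (ctr u *m (G *m v))) <=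
    (mnorm2 S ^+ j * vnorm2 d) * (mnorm2 G * (mnorm2 S ^+ j * vnorm2 c)).
  apply: le_trans (cmod_sc_ctr_le _ _) _.
  apply: ler_pM; rewrite ?vnorm2_ge0 ?mnorm2_exp_le //.
  apply: le_trans (mnorm2_le G v) _.
  by rewrite ler_wpM2l ?mnorm2_ge0 ?mnorm2_exp_le.
rewrite cmod_inv; apply: le_trans (ler_wpM2l _ uGv_le) _; first by rewrite invr_ge0 sqr_ge0.
by rewrite /D /exp_coeff /= expr_div_n le_eqVlt; apply/predU1l; ring.
Qed.

Lemma sum_cmod_Wterm_le k m :
  \sum_(k <= j < m) cmod (Wterm Y S c d j) <=
  D * (expR (2 * mnorm2 S) * exp_coeff (mnorm2 S) k ^+ 2).
Proof.
have D_ge0 : 0 <= D by rewrite !mulr_ge0 ?vnorm2_ge0 ?mnorm2_ge0.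
apply: le_trans (_ : \sum_(k <= j < m) D * exp_coeff (mnorm2 S) j ^+ 2 <= _).
  by apply: ler_sum => j _; apply: cmod_Wterm_le.
by rewrite -mulr_sumr ler_wpM2l // sum_sqr_exp_coeff_tail_le ?mnorm2_ge0.
Qed.

End WtermBound.

Section ComplexSeries.
Variable R : realType.
Local Open Scope classical_set_scope.

Lemma cvg_Re_Im (u : nat -> R[i]) (a b : R) :
  (fun k => complex.Re (u k)) @ \oo --> a ->
  (fun k => complex.Im (u k)) @ \oo --> b ->
  u @ \oo --> (a +i* b)%C.
Proof.
move=> /cvgr_dist_lt Re_u /cvgr_dist_lt Im_u.
(* The topology of R[i] is that of R[i]^o, where the normed-module lemmas apply. *)
suff : (u : nat -> (R[i])^o) @ \oo --> ((a +i* b)%C : (R[i])^o) by [].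
apply/cvgrPdist_lt => -[e1 e2]; rewrite ltcE /= => /andP[/eqP e2_eq0 e1_gt0].
have e1_half : 0 < e1 / 2 by rewrite divr_gt0.
near=> k.
rewrite e2_eq0 -cmodE ltcR; apply: le_lt_trans (cmod_le_Re_Im _) _.
have Re_k : `|a - complex.Re (u k)| < e1 / 2 by near: k; apply: Re_u.
have Im_k : `|b - complex.Im (u k)| < e1 / 2 by near: k; apply: Im_u.
rewrite !raddfB /=; lra.
Unshelve. all: by end_near.
Qed.

Lemma cmod_cvg_le (u : nat -> R[i]) (a b B : R) :
  (fun k => complex.Re (u k)) @ \oo --> a ->
  (fun k => complex.Im (u k)) @ \oo --> b ->
  (forall k, cmod (u k) <= B) -> cmod (a +i* b)%C <= B.
Proof.
move=> Re_u Im_u u_le.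
have B_ge0 : 0 <= B by apply: le_trans (u_le 0%N); apply: cmod_ge0.
rewrite /cmod /= -(ger0_norm B_ge0) -sqrtr_sqr ler_wsqrtr //.
have sq_cvg : (fun k => complex.Re (u k) * complex.Re (u k) +
    complex.Im (u k) * complex.Im (u k)) @ \oo --> a * a + b * b.
  by apply: cvgD; apply: cvgM.
rewrite !expr2; apply: (ler_cvg_to sq_cvg (cvg_cst (B * B))); near=> k.
have sum_ge0 : 0 <= complex.Re (u k) ^+ 2 + complex.Im (u k) ^+ 2 by rewrite addr_ge0 ?sqr_ge0.
rewrite -!expr2 -(sqr_sqrtr sum_ge0) lerXn2r ?nnegrE ?sqrtr_ge0 //.
exact: u_le.
Unshelve. all: by end_near.
Qed.

Lemma series_cvg_cmod_le (F : nat -> R[i]) (B : R) :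
  (forall k, \sum_(0 <= j < k) cmod (F j) <= B) ->
  exists2 L, series F @ \oo --> L & cmod L <= B.
Proof.
move=> F_le.
have real_cvg (G : nat -> R) : (forall j, `|G j| <= cmod (F j)) -> cvgn (series G).
  move=> G_le; apply: normed_cvg; apply: nondecreasing_is_cvgn.
    by apply: nondecreasing_series => j _ _; apply: normr_ge0.
  by exists B => _ [k _ <-]; apply: le_trans (F_le k); apply: ler_sum => j _; apply: G_le.
have /cvg_ex [a Re_cvg] := real_cvg _ (fun j => Re_le_cmod (F j)).
have /cvg_ex [b Im_cvg] := real_cvg _ (fun j => Im_le_cmod (F j)).
have Re_series k : complex.Re (series F k) = series (fun j => complex.Re (F j)) k.
  by rewrite /series /= raddf_sum.
have Im_series k : complex.Im (series F k) = series (fun j => complex.Im (F j)) k.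
  by rewrite /series /= raddf_sum.
have Re_sum_cvg : (fun k => complex.Re (series F k)) @ \oo --> a.
  by under eq_fun do rewrite Re_series.
have Im_sum_cvg : (fun k => complex.Im (series F k)) @ \oo --> b.
  by under eq_fun do rewrite Im_series.
exists (a +i* b)%C; first exact: cvg_Re_Im.
by apply: cmod_cvg_le Re_sum_cvg Im_sum_cvg _ => k; apply: le_trans (cmod_sum _ _ _) (F_le k).
Qed.

End ComplexSeries.

Lemma sum_nat_mask (V : zmodType) (F : nat -> V) k m :
  \sum_(0 <= j < m) (if (k <= j)%N then F j else 0) = \sum_(k <= j < m) F j.
Proof. by rewrite [RHS](big_nat_widenl k 0) // [RHS]big_mkcond. Qed.

Section TaylorInnerProduct.
Variables (R : rcfType) (n p N : nat).
Variables (Y : 'M[R[i]]_(n, p)) (S : 'M[R[i]]_p) (c d : 'cV[R[i]]_p).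
Variables (x z : 'I_N.+1 -> 'cV[R[i]]_n).

Lemma sum_sc_taylor_coef Nmax m : (N < Nmax)%N -> (Nmax < m)%N ->
  \sum_(0 <= i < m) sc (ctr (taylor_coef Y S d z i) *m taylor_coef Y S c x i) =
  \sum_(k < N.+1) sc (ctr (z k) *m x k) + sc (ctr d *m Wmat Y S N.+1 Nmax *m c)
  + \sum_(Nmax.+1 <= j < m) Wterm Y S c d j.
Proof.
move=> lt_N_Nmax lt_Nmax_m.
have tail_eq j : (N < j)%N ->
    sc (ctr (taylor_coef Y S d z j) *m taylor_coef Y S c x j) = Wterm Y S c d j.
  by move=> lt_N_j; rewrite /taylor_coef insubF ?sc_ctr_taylor_tail // ltnNge lt_N_j.
have lt_N_m := ltn_trans lt_N_Nmax lt_Nmax_m.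
rewrite (big_cat_nat (n := N.+1)) //= [X in _ + X](big_cat_nat (n := Nmax.+1)) //=;
  last by rewrite ltnS ltnW.
rewrite (sc_Wmat Y S c d N.+1 Nmax) -[RHS]addrA.
congr (_ + (_ + _)).
- by rewrite big_mkord; apply: eq_bigr => k _; rewrite /taylor_coef valK.
- by apply: eq_big_nat => j /andP[lt_N_j _]; apply: tail_eq.
- by apply: eq_big_nat => j /andP[lt_Nmax_j _]; apply/tail_eq/(ltn_trans lt_N_Nmax).
Qed.

End TaylorInnerProduct.

Unset Implicit Arguments.
Local Open Scope classical_set_scope.

Theorem mainTheorem3 (R : realType) (n p N : nat)
  (Y : 'M[R[i]]_(n, p)) (S : 'M[R[i]]_p) (c d : 'cV[R[i]]_p)
  (x z : 'I_N.+1 -> 'cV[R[i]]_n) (Nmax : nat) :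
  (N.+1 <= Nmax)%N ->
  let eps := fun_inner (taylor_coef Y S c x) (taylor_coef Y S d z)
             - \sum_(k < N.+1) sc (ctr (z k) *m x k)
             - sc (ctr d *m Wmat Y S N.+1 Nmax *m c) in
  cmod eps <= vnorm2 d * mnorm2 (ctr Y *m Y) * vnorm2 c
     * (expR (2 * mnorm2 S) * mnorm2 S ^+ (2 * Nmax.+1)
        / ((Nmax.+1)`!%:R) ^+ 2).
Proof.
move=> lt_N_Nmax /=.
set A := \sum_(k < N.+1) _; set B := sc _.
pose tail j := if (Nmax < j)%N then Wterm Y S c d j else 0.
have bound_eq : mnorm2 S ^+ (2 * Nmax.+1) / (Nmax.+1)`!%:R ^+ 2 =
    exp_coeff (mnorm2 S) Nmax.+1 ^+ 2.
  by rewrite /exp_coeff /= expr_div_n -exprM mulnC.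
have [L tail_cvg cmod_L] : exists2 L, series tail @ \oo --> L &
    cmod L <= vnorm2 d * mnorm2 (ctr Y *m Y) * vnorm2 c *
              (expR (2 * mnorm2 S) * exp_coeff (mnorm2 S) Nmax.+1 ^+ 2).
  apply: series_cvg_cmod_le => k; apply: le_trans (sum_cmod_Wterm_le _ _ _ _ _ k).
  rewrite -(sum_nat_mask (fun j => cmod (Wterm Y S c d j)) Nmax.+1).
  by apply: ler_sum => j _; rewrite /tail (fun_if (@cmod R)) cmod0.
have inner_cvg : (fun m => \sum_(0 <= i < m)
    sc (ctr (taylor_coef Y S d z i) *m taylor_coef Y S c x i)) @ \oo --> A + B + L.
  have shifted_cvg : ((fun m => A + B + series tail m) : nat -> R[i]^o) @ \oo -->
      (A + B + L : R[i]^o) by apply: cvgD; [exact: cvg_cst | exact: tail_cvg].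
  apply: cvg_trans shifted_cvg; apply: near_eq_cvg.
  near=> m; rewrite /series /= sum_nat_mask (sum_sc_taylor_coef Y S c d x z lt_N_Nmax) //.
  near: m; by exists Nmax.+1.
rewrite /fun_inner (cvg_lim (@norm_hausdorff _ (R[i]^o)) inner_cvg).
by rewrite -[expR _ * _ / _]mulrA bound_eq (_ : A + B + L - A - B = L) //; ring.
Unshelve. all: by end_near.
Qed.
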